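(* Let $k\ge 1$, $l=1$, $n=k+1$, $p\in[0,1]$, $q=1-p$. Consider the binning code (the Ni code for $l=1$) whose $2^k$ bins are the pairs $\{x^n,\bar{x}^n\}$, $x^n\in\{0,1\}^n$, where $\bar{x}^n$ is the complement of $x^n$ (all bits flipped). Then its equivocation $H(M\mid Z^n)$ equals $V^*(1,k,p)$, the optimal value of the linear program $$\text{maximize } \sum_{\mathbf{r}\in\mathcal{V}} f(\mathbf{r})\,x_{\mathbf{r}}\quad\text{subject to}\quad \sum_{\mathbf{r}\in\mathcal{V}} r_j\,x_{\mathbf{r}}=\binom{n}{j}\ (j=0,\dots,n),\qquad x_{\mathbf{r}}\ge 0,$$ where $\mathcal{V}=\{\mathbf{r}\in\mathbb{Z}_{\ge0}^{n+1}:\sum_j r_j=2\}$, $\pi(\mathbf{r})=\sum_{j=0}^n r_jp^jq^{n-j}$ and $f(\mathbf{r})=-\pi(\mathbf{r})\log_2\pi(\mathbf{r})$. In particular this code attains the upper bound $V^*(1,k,p)$ on the equivocation of all binning codes with $2^k$ bins of size $2$.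
   Context: Wiretap model: a message $M$ is uniform on $\{1,\dots,2^k\}$; the encoder maps message $i$ to a codeword $X^n$ chosen uniformly at random from bin $\mathcal{B}_i$, the bins forming a partition of $\{0,1\}^n$ into sets of equal size. The eavesdropper observes $Z^n$, the output of a binary symmetric channel with crossover probability $p$ applied to $X^n$. For an observation $z^n$, $P(x^n\mid z^n)=p^{d_H(x^n,z^n)}q^{n-d_H(x^n,z^n)}$ ($d_H$ = Hamming distance), $P_{\mathcal{B}_i}(z^n)=\sum_{x^n\in\mathcal{B}_i}P(x^n\mid z^n)$, $H(M\mid Z^n=z^n)=-\sum_i P_{\mathcal{B}_i}(z^n)\log_2P_{\mathcal{B}_i}(z^n)$, and $H(M\mid Z^n)=2^{-n}\sum_{z^n}H(M\mid Z^n=z^n)$. Convention $0\log_2 0=0$. *)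

From HB Require Import structures.
From mathcomp Require Import all_boot all_order all_algebra.
From mathcomp Require Import all_classical all_reals all_analysis.
Set Implicit Arguments. Unset Strict Implicit. Unset Printing Implicit Defensive.
Import Order.TTheory GRing.Theory Num.Theory.
Local Open Scope ring_scope.

Section Wiretap.
Variable R : realType.

Definition log2 (t : R) : R := ln t / ln 2.
(* t |-> - t log2 t  (at t = 0 this is 0, matching 0 log 0 = 0) *)
Definition hfun (t : R) : R := - (t * log2 t).

Definition word (n : nat) := {ffun 'I_n -> bool}.

Definition dH (n : nat) (x z : word n) : nat := #|[set i | x i != z i]|.

(* P(x^n | z^n) for a BSC(p) with q = 1 - p *)
Definition Pcond (n : nat) (p : R) (x z : word n) : R :=
  p ^+ dH x z * (1 - p) ^+ (n - dH x z).

Definition PB (n : nat) (p : R) (B : {set word n}) (z : word n) : R :=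
  \sum_(x in B) Pcond p x z.

(* H(M | Z^n) for the binning code whose bins are the blocks of Pt *)
Definition equivocation (n : nat) (p : R) (Pt : {set {set word n}}) : R :=
  (2%:R ^+ n)^-1 * \sum_(z : word n) \sum_(B in Pt) hfun (PB p B z).

Definition binning_code (n m s : nat) (Pt : {set {set word n}}) : Prop :=
  finset.partition Pt [set: word n] /\ #|Pt| = m /\ forall B, B \in Pt -> #|B| = s.

Definition compl_word (n : nat) (x : word n) : word n := [ffun i => ~~ x i].

Definition ni_code (n : nat) : {set {set word n}} :=
  [set [set x; compl_word x] | x : word n].

(* candidate profiles r in Z_{>=0}^{n+1}; entries are bounded by 2 on V *)
Definition profile (n : nat) := {ffun 'I_n.+1 -> 'I_3}.
Definition inV (n : nat) (r : profile n) : bool := (\sum_j (r j : nat) == 2)%N.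

Definition piV (n : nat) (p : R) (r : profile n) : R :=
  \sum_(j < n.+1) (r j : nat)%:R * (p ^+ j * (1 - p) ^+ (n - j)).
Definition fV (n : nat) (p : R) (r : profile n) : R := hfun (piV p r).

Definition LP_feasible (n : nat) (x : profile n -> R) : Prop :=
  (forall r, inV r -> 0 <= x r) /\
  forall j : 'I_n.+1,
    \sum_(r | inV r) (r j : nat)%:R * x r = ('C(n, j))%:R.

Definition LP_obj (n : nat) (p : R) (x : profile n -> R) : R :=
  \sum_(r | inV r) fV p r * x r.

Definition LP_opt_value (n : nat) (p : R) (v : R) : Prop :=
  (exists x : profile n -> R, LP_feasible x /\ LP_obj p x = v) /\
  (forall x : profile n -> R, LP_feasible x -> LP_obj p x <= v).

End Wiretap.

(* With a_d = p^d q^(n-d) and h t = - t log2 t, a bin {x1, x2} contributes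
   h(a_d1 + a_d2) to H(M | Z^n = z), where d_i = d_H(x_i, z).  As h is concave
   and d |-> a_d is monotone, W i j = h(a_i + a_j) is an inverse Monge array, so
   the antidiagonal j = n - i is an optimal assignment and there are potentials
   y with W i j <= y_i + y_j, with equality on the antidiagonal.  Summing over
   the bins bounds the equivocation of every code with bins of size two, and
   (by weak duality) the value of the linear program, by sum_j C(n, j) y_j.
   Since d_H(complement of x, z) = n - d_H(x, z), the bins of the Ni code lie on
   the antidiagonal, so it attains this bound, and so does the feasible point
   giving weight C(n, j)/2 to the profile e_j + e_(n-j). *)

From HB Require Import structures.
From mathcomp Require Import all_boot all_order all_algebra.
From mathcomp Require Import all_classical all_reals all_analysis.
From mathcomp Require Import ring lra zify.
Set Implicit Arguments. Unset Strict Implicit. Unset Printing Implicit Defensive.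
Import Order.TTheory GRing.Theory Num.Theory.
Local Open Scope ring_scope.

Section EntropyConcavity.
Variable R : realType.

Definition xlnx (t : R) : R := t * ln t.

Lemma ln_le_subr1 (t : R) : 0 < t -> ln t <= t - 1.
Proof. by move=> t0; have := @le_ln1Dx R (t - 1); rewrite addrCA subrr addr0; apply; lra. Qed.

Lemma xlnx_tangent (t s : R) : 0 < t -> 0 <= s ->
  xlnx t + (ln t + 1) * (s - t) <= xlnx s.
Proof.
move=> t0; rewrite le_eqVlt => /predU1P[<-|s0]; first by rewrite /xlnx mul0r; nra.
have key : s * ln (t / s) <= t - s.
  have -> : t - s = s * (t / s - 1) by field; rewrite gt_eqF.
  by rewrite ler_pM2l //; apply/ln_le_subr1/divr_gt0.
rewrite ln_div ?posrE // in key; rewrite /xlnx; nra.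
Qed.

Lemma xlnx_chord (r t s : R) : 0 <= r -> r <= t -> t <= s ->
  (s - r) * xlnx t <= (s - t) * xlnx r + (t - r) * xlnx s.
Proof.
move=> r_ge0 le_rt le_ts; have [t_eq0|t_neq0] := eqVneq t 0.
  have r_eq0 : r = 0 by lra.
  by rewrite t_eq0 r_eq0 /xlnx !mul0r; lra.
have t_gt0 : 0 < t by rewrite lt_def t_neq0; lra.
have := xlnx_tangent t_gt0 r_ge0.
have := xlnx_tangent t_gt0 (le_trans r_ge0 (le_trans le_rt le_ts)).
nra.
Qed.

Lemma xlnx_majorize (r t t' s : R) : 0 <= r -> r <= t -> r <= t' -> t + t' = r + s ->
  xlnx t + xlnx t' <= xlnx r + xlnx s.
Proof.
have [-> r_ge0 le_rt le_rt' sum_eq|s_neq_r r_ge0 le_rt le_rt' sum_eq] := eqVneq s r.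
  have -> : t = r by lra.
  by have -> : t' = r by lra.
have sr_gt0 : 0 < s - r by rewrite subr_gt0 lt_def s_neq_r /=; lra.
have le_ts : t <= s by lra.
have le_t's : t' <= s by lra.
have chord := xlnx_chord r_ge0 le_rt le_ts; have chord' := xlnx_chord r_ge0 le_rt' le_t's.
have t'E : t' = r + s - t by lra.
by rewrite t'E in chord' *; rewrite -(ler_pM2l sr_gt0); lra.
Qed.

Lemma hfunE (t : R) : hfun t = - xlnx t / ln 2.
Proof. by rewrite /hfun /log2 /xlnx mulrA mulNr. Qed.

Lemma hfun_add_exchange (x x' y y' : R) :
  0 <= x -> 0 <= x' -> 0 <= y -> 0 <= y' -> 0 <= (x - x') * (y - y') ->
  hfun (x + y) + hfun (x' + y') <= hfun (x + y') + hfun (x' + y).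
Proof.
wlog [xx' yy'] : x x' y y' / x <= x' /\ y <= y'.
  move=> sym x0 x'0 y0 y'0 xy; have [xx'|x'x] := lerP x x'.
    have [yy'|y'y] := lerP y y'; first exact: sym.
    have -> : x = x' by nra.
    by rewrite [hfun (x' + y) + _]addrC.
  have yy' : y' <= y by nra.
  rewrite addrC [hfun (x + y') + _]addrC; apply: sym => //; nra.
(* Now (x + y', x' + y) is majorized by (x + y, x' + y'), and xlnx is convex. *)
move=> x0 x'0 y0 y'0 _; rewrite !hfunE -!mulrDl ler_pM2r ?invr_gt0 ?ln_gt0 ?ltr1n //.
rewrite -!opprD lerN2; apply: xlnx_majorize; lra.
Qed.
End EntropyConcavity.

Section MongeDual.
Variables (R : realFieldType) (n : nat) (W : nat -> nat -> R).
Hypothesis W_sym : forall i j, W i j = W j i.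
Hypothesis W_Monge : forall i i' j j',
  (i <= i')%N -> (i' <= n)%N -> (j <= j')%N -> (j' <= n)%N ->
  W i j + W i' j' <= W i j' + W i' j.

Definition dual_potential (i : nat) : R :=
  \sum_(t < i) (W t.+1 (n - t) - W t (n - t)).

(* [dual_potential] accumulates the increments of [W] along the staircase
   (t, n - t) -> (t + 1, n - t); the shift by half of
   [dual_potential i - dual_potential (n - i)] cancels between i and n - i,
   which makes the potentials tight on the antidiagonal. *)
Definition dual_solution (i : nat) : R :=
  (dual_potential i - dual_potential (n - i) + W i (n - i)) / 2.

Local Notation u := dual_potential.

Lemma dual_potentialS i : u i.+1 = u i + (W i.+1 (n - i) - W i (n - i)).
Proof. by rewrite /u big_ord_recr. Qed.

Lemma dual_potential_gap i b : (i <= n)%N -> (b <= n)%N ->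
  W i (n - b) - W b (n - b) <= u i - u b.
Proof.
move=> le_in le_bn; have [le_bi|/ltnW le_ib] := leqP b i.
  elim: i le_in le_bi => [|i IHi] le_in; first by rewrite leqn0 => /eqP->; lra.
  rewrite leq_eqVlt => /predU1P[->|]; first lra.
  rewrite ltnS => le_bi; have := IHi (ltnW le_in) le_bi.
  have := W_Monge (leqnSn i) le_in (leq_sub2l n le_bi) (leq_subr b n).
  rewrite dual_potentialS; lra.
elim: b le_bn le_ib => [|b IHb] le_bn; first by rewrite leqn0 => /eqP->; lra.
rewrite leq_eqVlt => /predU1P[<-|]; first lra.
rewrite ltnS => le_ib; have := IHb (ltnW le_bn) le_ib.
have := W_Monge (leqW le_ib) le_bn (leq_sub2l n (leqnSn b)) (leq_subr b n).
rewrite dual_potentialS; lra.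
Qed.

Lemma dual_solution_ge i j : (i <= n)%N -> (j <= n)%N ->
  W i j <= dual_solution i + dual_solution j.
Proof.
move=> le_in le_jn.
have := dual_potential_gap le_in (leq_subr j n); rewrite subKn //.
have := dual_potential_gap le_jn (leq_subr i n); rewrite subKn //.
rewrite /dual_solution (W_sym j i) (W_sym (n - i) i) (W_sym (n - j) j); lra.
Qed.

Lemma dual_solution_antidiag j : (j <= n)%N ->
  dual_solution j + dual_solution (n - j) = W j (n - j).
Proof. by move=> le_jn; rewrite /dual_solution subKn // (W_sym (n - j) j); lra. Qed.
End MongeDual.

Section BSCDual.
Variables (R : realType) (n : nat) (p : R).
Hypotheses (p_ge0 : 0 <= p) (p_le1 : p <= 1).

Definition bsc_weight (j : nat) : R := p ^+ j * (1 - p) ^+ (n - j).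

Lemma bsc_weight_ge0 j : 0 <= bsc_weight j.
Proof. by rewrite mulr_ge0 // exprn_ge0 // subr_ge0. Qed.

Lemma bsc_weightS t : (t < n)%N ->
  bsc_weight t.+1 = p * (p ^+ t * (1 - p) ^+ (n - t.+1)) /\
  bsc_weight t = (1 - p) * (p ^+ t * (1 - p) ^+ (n - t.+1)).
Proof. by move=> lt_tn; rewrite /bsc_weight -(subnSK lt_tn) !exprS; split; ring. Qed.

Lemma bsc_weight_monotone s t : (s <= t)%N -> (t <= n)%N ->
  if p <= 1 - p then bsc_weight t <= bsc_weight s else bsc_weight s <= bsc_weight t.
Proof.
move=> le_st le_tn; pose D := [pred u | (u <= n)%N].
have D_convex : {in D &, forall a b c, (a < c < b)%N -> c \in D}.
  by move=> a b _ /= le_bn c /andP[_ /ltnW/leq_trans]; apply.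
have c_ge0 u : 0 <= p ^+ u * (1 - p) ^+ (n - u.+1).
  by rewrite mulr_ge0 ?exprn_ge0 ?subr_ge0.
have le_sn : (s <= n)%N by exact: leq_trans le_tn.
case: ifPn => [le_pq|]; last rewrite -ltNge => lt_qp.
  apply: (Order.NatMonotonyTheory.nonincn_inP D_convex) => // u _.
  by rewrite inE => /bsc_weightS[-> ->]; apply: ler_wpM2r.
apply: (Order.NatMonotonyTheory.nondecn_inP D_convex) => // u _.
by rewrite inE => /bsc_weightS[-> ->]; apply/ler_wpM2r/ltW.
Qed.

Lemma bsc_weight_comonotone i i' j j' :
  (i <= i')%N -> (i' <= n)%N -> (j <= j')%N -> (j' <= n)%N ->
  0 <= (bsc_weight i - bsc_weight i') * (bsc_weight j - bsc_weight j').
Proof.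
move=> le_ii' le_i'n le_jj' le_j'n.
have := bsc_weight_monotone le_ii' le_i'n; have := bsc_weight_monotone le_jj' le_j'n.
case: ifP => _ le_j le_i; first by rewrite mulr_ge0 // subr_ge0.
by rewrite mulr_le0 // subr_le0.
Qed.

Definition bsc_pair_entropy (i j : nat) : R := hfun (bsc_weight i + bsc_weight j).

Definition bsc_dual : nat -> R := dual_solution n bsc_pair_entropy.

Lemma bsc_pair_entropy_Monge i i' j j' :
  (i <= i')%N -> (i' <= n)%N -> (j <= j')%N -> (j' <= n)%N ->
  bsc_pair_entropy i j + bsc_pair_entropy i' j' <=
  bsc_pair_entropy i j' + bsc_pair_entropy i' j.
Proof.
move=> le_ii' le_i'n le_jj' le_j'n; apply: hfun_add_exchange; rewrite ?bsc_weight_ge0 //.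
exact: bsc_weight_comonotone.
Qed.

Lemma bsc_pair_entropyC i j : bsc_pair_entropy i j = bsc_pair_entropy j i.
Proof. by rewrite /bsc_pair_entropy addrC. Qed.

Lemma bsc_dual_ge i j : (i <= n)%N -> (j <= n)%N ->
  hfun (bsc_weight i + bsc_weight j) <= bsc_dual i + bsc_dual j.
Proof. exact: dual_solution_ge bsc_pair_entropyC bsc_pair_entropy_Monge i j. Qed.

Lemma bsc_dual_antidiag j : (j <= n)%N ->
  bsc_dual j + bsc_dual (n - j) = hfun (bsc_weight j + bsc_weight (n - j)).
Proof. exact: dual_solution_antidiag bsc_pair_entropyC j. Qed.
End BSCDual.

Definition dual_value (R : realType) (n : nat) (y : nat -> R) : R :=
  \sum_(j < n.+1) 'C(n, j)%:R * y j.

Section Words.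
Variable n : nat.

Lemma dH_le (x z : word n) : (dH x z <= n)%N.
Proof. by rewrite /dH -[n in (_ <= n)%N]card_ord max_card. Qed.

Lemma card_dH_eq (z : word n) j : #|[set x : word n | dH x z == j]| = 'C(n, j).
Proof.
pose diff (x : word n) := [set i | x i != z i].
pose flip (A : {set 'I_n}) : word n := [ffun i => (i \in A) (+) z i].
have diffK : cancel diff flip.
  by move=> x; apply/ffunP => i; rewrite ffunE inE; case: (x i); case: (z i).
have flipK : cancel flip diff.
  by move=> A; apply/setP => i; rewrite inE ffunE; case: (i \in A); case: (z i).
rewrite -[n in 'C(n, j)]card_ord -card_draws -(card_imset _ (can_inj flipK)).
by rewrite (can2_imset_pre _ flipK diffK); apply: eq_card => x; rewrite !inE.
Qed.

Lemma sum_dH (V : pzSemiRingType) (z : word n) (F : nat -> V) :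
  \sum_(x : word n) F (dH x z) = \sum_(j < n.+1) 'C(n, j)%:R * F j.
Proof.
rewrite (partition_big (fun x => inord (dH x z) : 'I_n.+1) xpredT) //=.
apply: eq_bigr => j _.
have inordE x : (inord (dH x z) == j) = (dH x z == j).
  by rewrite -(inj_eq val_inj) /= inordK // ltnS dH_le.
rewrite (eq_bigr (fun _ => F j)); last by move=> x; rewrite inordE => /eqP->.
rewrite sumr_const -(card_dH_eq z) mulr_natl; congr (_ *+ _).
by apply: eq_card => x; rewrite inE -inordE.
Qed.

Lemma dH_compl (x z : word n) : dH (compl_word x) z = (n - dH x z)%N.
Proof.
rewrite /dH; have -> : [set i | compl_word x i != z i] = ~: [set i | x i != z i].
  by apply/setP => i; rewrite !inE ffunE; case: (x i); case: (z i).
by rewrite cardsCs finset.setCK card_ord.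
Qed.

Lemma compl_wordK : involutive (@compl_word n).
Proof. by move=> x; apply/ffunP => i; rewrite !ffunE negbK. Qed.

Lemma compl_word_neq (x : word n) : (0 < n)%N -> x != compl_word x.
Proof.
move=> n_gt0; apply/negP => /eqP/ffunP/(_ (Ordinal n_gt0)); rewrite ffunE.
by case: (x _).
Qed.

Lemma compl_pairE (x t : word n) : t \in [set x; compl_word x] ->
  [set x; compl_word x] = [set t; compl_word t].
Proof. by rewrite !inE => /predU1P[->|/eqP->] //; rewrite compl_wordK finset.setUC. Qed.

Lemma ni_code_partition : finset.partition (ni_code n) [set: word n].
Proof.
apply/and3P; split.
- apply/eqP/setP => x; rewrite inE; apply/bigcupP.
  by exists [set x; compl_word x]; [apply/imsetP; exists x | rewrite !inE eqxx].
- apply/finset.trivIsetP => _ _ /imsetP[x _ ->] /imsetP[x' _ ->].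
  move=> neq; rewrite -setI_eq0; apply: contraNT neq => /set0Pn[t].
  by rewrite inE => /andP[/compl_pairE-> /compl_pairE->].
- by apply/imsetP => -[x _ /setP/(_ x)]; rewrite !inE eqxx.
Qed.
End Words.

Section Equivocation.
Variables (R : realType) (n : nat) (p : R) (y : nat -> R).
Variable Pt : {set {set word n}}.
Hypothesis Pt_partition : finset.partition Pt [set: word n].

Lemma mean_sum_partition_dH :
  (2%:R ^+ n)^-1 * \sum_(z : word n) \sum_(B in Pt) \sum_(x in B) y (dH x z) =
  dual_value n y.
Proof.
have sum_z z : \sum_(B in Pt) \sum_(x in B) y (dH x z) = dual_value n y.
  rewrite -(set_partition_big _ Pt_partition) (eq_bigl xpredT) ?sum_dH // => x.
  by rewrite finset.in_setT.
rewrite (eq_bigr _ (fun z _ => sum_z z)) sumr_const card_ffun card_bool card_ord.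
by rewrite -[_ *+ 2 ^ n]mulr_natl natrX mulKf // expf_neq0 // pnatr_eq0.
Qed.

Lemma equivocation_le_dual :
  (forall B z, B \in Pt -> hfun (PB p B z) <= \sum_(x in B) y (dH x z)) ->
  equivocation p Pt <= dual_value n y.
Proof.
move=> le_B; rewrite -mean_sum_partition_dH ler_wpM2l ?invr_ge0 ?exprn_ge0 ?ler0n //.
by apply: ler_sum => z _; apply: ler_sum => B PtB; apply: le_B.
Qed.

Lemma equivocation_eq_dual :
  (forall B z, B \in Pt -> hfun (PB p B z) = \sum_(x in B) y (dH x z)) ->
  equivocation p Pt = dual_value n y.
Proof.
move=> eq_B; rewrite -mean_sum_partition_dH; congr (_ * _).
by apply: eq_bigr => z _; apply: eq_bigr => B PtB; apply: eq_B.
Qed.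
End Equivocation.

Lemma sum_set2 (V : nmodType) (T : finType) (x1 x2 : T) (G : T -> V) : x1 != x2 ->
  \sum_(x in [set x1; x2]) G x = G x1 + G x2.
Proof. by move=> neq; rewrite big_setU1 ?big_set1 // inE. Qed.

Section PairBins.
Variables (R : realType) (n : nat) (p : R).
Hypotheses (p_ge0 : 0 <= p) (p_le1 : p <= 1).

Local Notation y := (bsc_dual n p).

Lemma hfun_PB_pair_le (B : {set word n}) z : #|B| = 2 ->
  hfun (PB p B z) <= \sum_(x in B) y (dH x z).
Proof.
move/eqP/finset.cards2P => [x1 [x2 [neq ->]]]; rewrite /PB !sum_set2 //.
exact: bsc_dual_ge (dH_le x1 z) (dH_le x2 z).
Qed.

Lemma hfun_PB_compl_pair (x z : word n) : (0 < n)%N ->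
  hfun (PB p [set x; compl_word x] z) = \sum_(t in [set x; compl_word x]) y (dH t z).
Proof.
move=> n_gt0; rewrite /PB /Pcond !sum_set2 ?compl_word_neq // dH_compl.
by rewrite bsc_dual_antidiag ?dH_le.
Qed.

Lemma equivocation_pairs_le (Pt : {set {set word n}}) :
  finset.partition Pt [set: word n] -> (forall B, B \in Pt -> #|B| = 2) ->
  equivocation p Pt <= dual_value n y.
Proof.
by move=> Pt_part Pt_pairs; apply: equivocation_le_dual => // B z /Pt_pairs/hfun_PB_pair_le.
Qed.

Lemma equivocation_ni_code : (0 < n)%N -> equivocation p (ni_code n) = dual_value n y.
Proof.
move=> n_gt0; apply: equivocation_eq_dual (ni_code_partition n) _ => _ z /imsetP[x _ ->].
exact: hfun_PB_compl_pair.
Qed.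
End PairBins.

Section Profiles.
Variable n : nat.

Definition pair_profile (i j : 'I_n.+1) : profile n :=
  [ffun l => inord ((l == i) + (l == j))].

Lemma pair_profileE i j l : pair_profile i j l = ((l == i) + (l == j))%N :> nat.
Proof. by rewrite ffunE inordK //; case: (l == i); case: (l == j). Qed.

Lemma sum_pair_profile (V : pzSemiRingType) i j (F : 'I_n.+1 -> V) :
  \sum_l (pair_profile i j l : nat)%:R * F l = F i + F j.
Proof.
under eq_bigr => l _ do rewrite pair_profileE natrD mulrDl !mulr_natl !mulrb.
by rewrite big_split /= -!big_mkcond !big_pred1_eq.
Qed.

Lemma inV_pair_profile i j : inV (pair_profile i j).
Proof.
have dirac k : (\sum_(l < n.+1) (l == k))%N = 1%N.
  by rewrite (bigD1 k) //= eqxx big1 // => l /negbTE->.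
by rewrite /inV (eq_bigr _ (fun l _ => pair_profileE i j l)) big_split /= !dirac.
Qed.

Lemma inVP (r : profile n) : inV r -> exists i j, r = pair_profile i j.
Proof.
move=> /eqP sum_r.
have [i /= r_i|r0] := pickP [pred l | 0 < r l]%N; last first.
  move: sum_r; rewrite big1 // => l _.
  by apply/eqP; rewrite -leqn0 leqNgt; apply/negbT/r0.
move: sum_r; rewrite (bigD1 i) //=; set rest := (\sum_(l | _) _)%N => sum_r.
have r_i_le2 : (r i <= 2)%N by rewrite -ltnS ltn_ord.
have [r_i2|r_i1] : r i = 2%N :> nat \/ r i = 1%N :> nat by lia.
  have /eqP : rest = 0%N by lia.
  rewrite sum_nat_eq0 => /forall_inP rest0.
  exists i, i; apply/ffunP => l; apply/val_inj; rewrite /= pair_profileE.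
  by case: eqVneq => [->|/rest0/eqP]; rewrite ?r_i2.
have /eqP/sum_nat_eq1[j [j_i r_j rest0]] : rest = 1%N by lia.
exists i, j; apply/ffunP => l; apply/val_inj; rewrite /= pair_profileE.
have [->|l_i] := eqVneq l i; first by rewrite eq_sym (negbTE j_i) r_i1.
by have [->|l_j] := eqVneq l j; [rewrite r_j | rewrite rest0].
Qed.
End Profiles.

Section LinearProgram.
Variables (R : realType) (n : nat) (p : R) (y : nat -> R).

Lemma LP_obj_le_dual (x : profile n -> R) : LP_feasible x ->
  (forall r : profile n, inV r -> fV p r <= \sum_l (r l : nat)%:R * y l) ->
  LP_obj p x <= dual_value n y.
Proof.
move=> [x_ge0 x_eq] fV_le.
have -> : dual_value n y = \sum_(r | inV r) (\sum_l (r l : nat)%:R * y l) * x r.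
  under [RHS]eq_bigr => r _ do rewrite mulr_suml.
  rewrite exchange_big; apply: eq_bigr => l _ /=.
  by rewrite -x_eq mulr_suml; apply: eq_bigr => r _; rewrite mulrAC.
by apply: ler_sum => r r_V; rewrite ler_wpM2r ?x_ge0 ?fV_le.
Qed.

Definition antidiag_solution (r : profile n) : R :=
  \sum_(j < n.+1 | r == pair_profile j (rev_ord j)) 'C(n, j)%:R / 2.

Lemma sum_antidiag_solution (G : profile n -> R) :
  \sum_(r | inV r) G r * antidiag_solution r =
  \sum_(j < n.+1) G (pair_profile j (rev_ord j)) * ('C(n, j)%:R / 2).
Proof.
under eq_bigr => r _ do rewrite mulr_sumr.
rewrite (exchange_big_dep xpredT) //=; apply: eq_bigr => j _.
rewrite (big_pred1 (pair_profile j (rev_ord j))) // => r.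
by apply/andb_idl => /eqP->; apply: inV_pair_profile.
Qed.

Lemma binomial_rev_ord (j : 'I_n.+1) : 'C(n, rev_ord j) = 'C(n, j).
Proof. by rewrite /= subSS bin_sub // -ltnS. Qed.

Lemma antidiag_solution_feasible : LP_feasible antidiag_solution.
Proof.
split=> [r _|l].
  by apply: sumr_ge0 => j _; rewrite divr_ge0 ?ler0n.
rewrite sum_antidiag_solution.
under eq_bigr => j _ do rewrite pair_profileE natrD mulrDl !mulr_natl !mulrb.
rewrite big_split /= -!big_mkcond /= (big_pred1 l) => [|j]; last by rewrite eq_sym.
rewrite (big_pred1 (rev_ord l)) => [|j]; last by rewrite eq_sym (canF_eq rev_ordK).
by rewrite binomial_rev_ord; field.
Qed.

Lemma LP_obj_antidiag_solution :
  (forall j : 'I_n.+1, fV p (pair_profile j (rev_ord j)) = y j + y (n - j)) ->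
  LP_obj p antidiag_solution = dual_value n y.
Proof.
move=> fV_antidiag; rewrite /LP_obj sum_antidiag_solution.
under eq_bigr => j _ do rewrite fV_antidiag mulrDl.
have rev_term (j : 'I_n.+1) :
    y (n - rev_ord j) * ('C(n, rev_ord j)%:R / 2) = y j * ('C(n, j)%:R / 2).
  by rewrite binomial_rev_ord /= subSS subKn // -ltnS.
rewrite big_split /= [X in _ + X](reindex_inj rev_ord_inj).
rewrite (eq_bigr _ (fun j _ => rev_term j)) -big_split.
by apply: eq_bigr => j _ /=; field.
Qed.
End LinearProgram.

Section BSCProgram.
Variables (R : realType) (n : nat) (p : R).
Hypotheses (p_ge0 : 0 <= p) (p_le1 : p <= 1).

Lemma fV_pair_profile (i j : 'I_n.+1) :
  fV p (pair_profile i j) = hfun (bsc_weight n p i + bsc_weight n p j).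
Proof. by rewrite /fV /piV sum_pair_profile. Qed.

Lemma fV_le_bsc_dual (r : profile n) : inV r ->
  fV p r <= \sum_l (r l : nat)%:R * bsc_dual n p l.
Proof.
move=> /inVP[i [j ->]]; rewrite fV_pair_profile sum_pair_profile.
by apply: bsc_dual_ge => //; rewrite -ltnS.
Qed.

Lemma fV_antidiag (j : 'I_n.+1) :
  fV p (pair_profile j (rev_ord j)) = bsc_dual n p j + bsc_dual n p (n - j).
Proof. by rewrite fV_pair_profile bsc_dual_antidiag /= ?subSS // -ltnS. Qed.
End BSCProgram.

Theorem lemma2 (R : realType) (k : nat) (p : R) :
  (1 <= k)%N -> 0 <= p -> p <= 1 ->
  LP_opt_value k.+1 p (equivocation p (ni_code k.+1)) /\
  (forall Pt : {set {set word k.+1}}, binning_code (2 ^ k) 2 Pt ->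
     equivocation p Pt <= equivocation p (ni_code k.+1)).
Proof.
(* The argument works for every n = k + 1 >= 1. *)
move=> _ p_ge0 p_le1; rewrite equivocation_ni_code //.
split; last by move=> Pt [Pt_part [_ Pt_pairs]]; apply: equivocation_pairs_le.
split=> [|x x_feas].
  exists (@antidiag_solution R k.+1); split; first exact: antidiag_solution_feasible.
  by apply: LP_obj_antidiag_solution => j; apply: fV_antidiag.
by apply: LP_obj_le_dual x_feas _ => r; apply: fV_le_bsc_dual.
Qed.
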